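(* Let $n\geq 4$ and let $\tau: T_n\to \mathrm{GL}_{n+1}(\mathbb{C})$ be a homogeneous $3$-local representation of the twin group $T_n$. Then $\tau$ is reducible.
   Context: The twin group $T_n$ ($n\geq 2$) is the group with generators $s_1,\dots,s_{n-1}$ and defining relations $s_i^2=1$ for $1\leq i\leq n-1$ and $s_is_j=s_js_i$ for $|i-j|\geq 2$. A representation $\tau:T_n\to\mathrm{GL}_{n+1}(\mathbb{C})$ is called homogeneous $3$-local if there is a single matrix $M\in\mathrm{GL}_3(\mathbb{C})$ such that $\tau(s_i)=\mathrm{diag}(I_{i-1},M,I_{n-i-1})$ (block-diagonal, with $I_r$ the $r\times r$ identity) for all $1\leq i\leq n-1$. A representation on $\mathbb{C}^{m}$ is reducible if there is a subspace $0\neq U\neq\mathbb{C}^m$ invariant under all images of the group. *)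

From mathcomp Require Import all_boot all_algebra.
From mathcomp Require Import reals complex.
Set Implicit Arguments. Unset Strict Implicit. Unset Printing Implicit Defensive.
Import GRing.Theory Num.Theory.
Local Open Scope ring_scope.

(* tau_loc n M i = diag(I_{i-1}, M, I_{n-i-1}) as an (n+1)x(n+1) matrix
   (indices 0..n; the block M occupies rows/columns i-1, i, i+1). *)
Definition tau_loc (F : nzRingType) (n : nat) (M : 'M[F]_3) (i : nat)
  : 'M[F]_n.+1 :=
  \matrix_(j < n.+1, k < n.+1)
    if ((i.-1 <= j <= i.+1) && (i.-1 <= k <= i.+1))%N
    then M (inord (j - i.-1)) (inord (k - i.-1))
    else (j == k)%:R.

(* Generators s_1,...,s_{n-1} of T_n are indexed by i with 1 <= i <= n-1. *)
Definition is_gen (n i : nat) : bool := (0 < i < n)%N.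

Definition twin_rep_rel (F : nzRingType) (n : nat) (M : 'M[F]_3) : Prop :=
  (forall i, is_gen n i -> tau_loc n M i *m tau_loc n M i = 1%:M) /\
  (forall i j, is_gen n i -> is_gen n j -> (i + 2 <= j)%N ->
     tau_loc n M i *m tau_loc n M j = tau_loc n M j *m tau_loc n M i).

(* Image under tau of the group element s_{w_1} ... s_{w_k}
   (every element of T_n is such a word, since s_i^{-1} = s_i). *)
Definition tau_word (F : nzRingType) (n : nat) (M : 'M[F]_3) (w : seq nat)
  : 'M[F]_n.+1 :=
  \prod_(i <- w) tau_loc n M i.

(* The column space of U (a subspace of F^m, vectors as columns) is invariant
   under A. *)
Definition col_invariant (F : fieldType) (m : nat) (A U : 'M[F]_m) : bool :=
  (((A *m U)^T) <= U^T)%MS.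

Definition twin_reducible (F : fieldType) (n : nat) (M : 'M[F]_3) : Prop :=
  exists U : 'M[F]_n.+1,
    (0 < \rank U < n.+1)%N /\
    forall w : seq nat, all (is_gen n) w -> col_invariant (tau_word n M w) U.

From mathcomp Require Import all_boot all_algebra.
From mathcomp Require Import reals complex zify.
Set Implicit Arguments. Unset Strict Implicit.
Import GRing.Theory Num.Theory.
Local Open Scope ring_scope.

(* The blocks of tau(s_1) and tau(s_3) overlap in the
   single index 2, so the entries (0,4) and (1,3) of tau(s_3) tau(s_1) vanish,
   while those of tau(s_1) tau(s_3) are m02 m02 and m12 m01 (entries of M
   indexed from 0).  Hence m02 = 0, and either m12 = 0, so that the last basis
   vector spans an invariant line, or m01 = 0, so that the hyperplane x0 = 0 is
   invariant. *)

Lemma mulmx_entry_single (F : nzRingType) m n p (A : 'M[F]_(m, n)) (B : 'M_(n, p))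
    j l k0 :
  (forall k, k != k0 -> A j k * B k l = 0) -> (A *m B) j l = A j k0 * B k0 l.
Proof. by move=> Ak; rewrite mxE (bigD1 k0) //= big1 ?addr0. Qed.

Section ColInvariant.
Variables (F : fieldType) (m : nat).
Implicit Types A B U : 'M[F]_m.

Lemma col_invariant_mul A B U :
  col_invariant A U -> col_invariant B U -> col_invariant (A *m B) U.
Proof.
rewrite /col_invariant -mulmxA !trmx_mul => AU BU.
exact: submx_trans (submxMr _ BU) AU.
Qed.

Lemma col_invariant_coord (S : pred 'I_m) A :
  (forall j k, S k -> ~~ S j -> A j k = 0) ->
  col_invariant A (diag_mx (\row_j (S j)%:R)).
Proof.
move=> AS; set P := diag_mx _; rewrite /col_invariant.
suff -> : A *m P = P *m (A *m P) by rewrite trmx_mul submxMl.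
apply/matrixP => j k; rewrite mul_diag_mx mul_mx_diag !mxE.
case Sk: (S k); case Sj: (S j); rewrite ?mulr1 ?mul1r ?mulr0 ?mul0r //.
by rewrite AS ?Sj.
Qed.

Lemma delta_mx_coord (k : 'I_m) :
  delta_mx k k = diag_mx (\row_j (j == k)%:R) :> 'M[F]_m.
Proof.
apply/matrixP => i j; rewrite !mxE.
by case: (i =P k) => [->|_]; rewrite ?mul0rn //= eq_sym.
Qed.

Lemma copid1_coord :
  copid_mx 1 = diag_mx (\row_j (0 < j)%N%:R) :> 'M[F]_m.+1.
Proof.
apply/matrixP => i j; rewrite !mxE -val_eqE /=.
case: eqP => [->|_]; last by rewrite /= !mulr0n subr0.
by case: (nat_of_ord j) => [|k]; rewrite /= ?subrr ?subr0.
Qed.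

End ColInvariant.

Section TauLoc.
Variables (F : nzRingType) (n : nat) (M : 'M[F]_3).

Lemma tau_loc_block i (j k : 'I_n.+1) :
  (i.-1 <= j <= i.+1)%N -> (i.-1 <= k <= i.+1)%N ->
  tau_loc n M i j k = M (inord (j - i.-1)) (inord (k - i.-1)).
Proof. by move=> jb kb; rewrite mxE jb kb. Qed.

Lemma tau_loc_offblock i (j k : 'I_n.+1) :
  ~~ ((i.-1 <= j <= i.+1) && (i.-1 <= k <= i.+1))%N ->
  tau_loc n M i j k = (j == k)%:R.
Proof. by move=> /negPf jkb; rewrite mxE jkb. Qed.

Lemma tau_loc_offblock_eq0 i (j k : 'I_n.+1) :
  j != k :> nat -> ~~ ((i.-1 <= j <= i.+1) && (i.-1 <= k <= i.+1))%N ->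
  tau_loc n M i j k = 0.
Proof. by move=> /negPf jk jkb; rewrite tau_loc_offblock // -val_eqE jk. Qed.

Lemma mul_tau_loc_offblock i (A : 'M_n.+1) (j l : 'I_n.+1) :
  ~~ (i.-1 <= j <= i.+1)%N -> (tau_loc n M i *m A) j l = A j l.
Proof.
move=> jb; rewrite (mulmx_entry_single (k0 := j)).
  by rewrite tau_loc_offblock ?(negPf jb) // eqxx mul1r.
by move=> k kj; rewrite tau_loc_offblock_eq0 ?(negPf jb) ?mul0r // eq_sym val_eqE.
Qed.

Lemma tau_loc_commute_overlap i a b :
  (0 < i)%N -> (i + 3 <= n)%N ->
  tau_loc n M i *m tau_loc n M i.+2 = tau_loc n M i.+2 *m tau_loc n M i ->
  (a < 2)%N -> (0 < b < 3)%N ->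
  M (inord a) (inord 2) * M (inord 0) (inord b) = 0.
Proof.
move=> i_gt0 i3n comm a_lt2 /andP[b_gt0 b_lt3].
pose j : 'I_n.+1 := inord (i.-1 + a); pose l : 'I_n.+1 := inord (i.+1 + b).
pose k0 : 'I_n.+1 := inord i.+1.
have jE : j = (i.-1 + a)%N :> nat by rewrite inordK //; lia.
have lE : l = (i.+1 + b)%N :> nat by rewrite inordK //; lia.
have k0E : k0 = i.+1 :> nat by rewrite inordK //; lia.
move/matrixP/(_ j l): comm.
rewrite (mul_tau_loc_offblock (i := i.+2)) ?tau_loc_offblock_eq0; try lia.
rewrite (mulmx_entry_single (k0 := k0)) => [|k].
  rewrite !tau_loc_block /= ?jE ?lE ?k0E; try lia.
  by rewrite addKn subnn addKn (_ : i.+1 - i.-1 = 2)%N //; lia.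
rewrite -val_eqE /= k0E => k_ne.
case: (ltngtP k i.+1) => [k_lt|k_gt|k_eq]; last by rewrite k_eq eqxx in k_ne.
  by rewrite [X in _ * X]tau_loc_offblock_eq0 ?mulr0 //; lia.
by rewrite tau_loc_offblock_eq0 ?mul0r //; lia.
Qed.

Lemma tau_loc_row0 i (k : 'I_n.+1) :
  M (inord 0) (inord 1) = 0 -> M (inord 0) (inord 2) = 0 -> (0 < k)%N ->
  tau_loc n M i ord0 k = 0.
Proof.
move=> M01 M02 k_gt0; rewrite mxE /=.
case: ifP => [/andP[/andP[i_le1 _] /andP[_ k_le]]|_]; last first.
  by rewrite -val_eqE /= eq_sym gtn_eqF.
have -> : i.-1 = 0%N by lia.
by rewrite subn0; have [->|->] : k = 1 :> nat \/ k = 2 :> nat by lia.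
Qed.

Lemma tau_loc_col_last i (j : 'I_n.+1) :
  M (inord 0) (inord 2) = 0 -> M (inord 1) (inord 2) = 0 ->
  is_gen n i -> (j < n)%N -> tau_loc n M i j ord_max = 0.
Proof.
move=> M02 M12 /andP[i_gt0 i_lt] j_lt; rewrite mxE /=.
case: ifP => [/andP[/andP[j_ge _] /andP[_ n_le]]|_]; last first.
  by rewrite -val_eqE /= ltn_eqF.
have -> : (n - i.-1 = 2)%N by lia.
by have [->|->] : (j - i.-1 = 0 \/ j - i.-1 = 1)%N by lia.
Qed.

End TauLoc.

Section Reducibility.
Variables (F : fieldType) (n : nat) (M : 'M[F]_3).

Lemma twin_reducible_of_invariant (U : 'M[F]_n.+1) :
  (0 < \rank U < n.+1)%N ->
  (forall i, is_gen n i -> col_invariant (tau_loc n M i) U) ->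
  twin_reducible n M.
Proof.
move=> rankU inv; exists U; split=> // w; rewrite /tau_word.
elim: w => [|i w IH] /=; first by rewrite big_nil /col_invariant mul1mx.
by case/andP=> gi gw; rewrite big_cons col_invariant_mul ?inv ?IH.
Qed.

Lemma twin_reducible_last_line :
  (0 < n)%N -> M (inord 0) (inord 2) = 0 -> M (inord 1) (inord 2) = 0 ->
  twin_reducible n M.
Proof.
move=> n_gt0 M02 M12.
apply: (@twin_reducible_of_invariant (delta_mx ord_max ord_max)).
  by rewrite mxrank_delta.
move=> i gi; rewrite delta_mx_coord; apply: col_invariant_coord => j k /eqP-> j_ne.
by rewrite tau_loc_col_last // ltn_neqAle -ltnS ltn_ord andbT.
Qed.

Lemma twin_reducible_hyperplane :
  (0 < n)%N -> M (inord 0) (inord 1) = 0 -> M (inord 0) (inord 2) = 0 ->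
  twin_reducible n M.
Proof.
move=> n_gt0 M01 M02.
apply: (@twin_reducible_of_invariant (copid_mx 1)).
  by rewrite rank_copid_mx // subn1 n_gt0 /=.
move=> i _; rewrite copid1_coord; apply: col_invariant_coord => j k k_gt0.
by rewrite -eqn0Ngt => /eqP j0; rewrite (_ : j = ord0) ?tau_loc_row0 //; apply: val_inj.
Qed.

End Reducibility.

Theorem theorem3p2 (R : realType) (n : nat) (M : 'M[R[i]]_3) :
  (4 <= n)%N ->
  M \in unitmx ->
  twin_rep_rel n M ->
  twin_reducible n M.
Proof.
move=> n_ge4 _ [_ commute].
have n_gt0 : (0 < n)%N by apply: ltn_trans n_ge4.
have comm13 := commute 1%N 3%N (ltnW (ltnW n_ge4)) n_ge4 isT.
have /eqP := tau_loc_commute_overlap (i := 1) (a := 0) (b := 2) isT n_ge4 comm13 isT isT.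
rewrite mulf_eq0 orbb => /eqP M02.
have /eqP := tau_loc_commute_overlap (i := 1) (a := 1) (b := 1) isT n_ge4 comm13 isT isT.
rewrite mulf_eq0 => /orP[/eqP M12 | /eqP M01].
  exact: twin_reducible_last_line.
exact: twin_reducible_hyperplane.
Qed.
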